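(* Let $k\in\mathbb{Z}$, let $m$ be an odd positive integer, and let $p>1$ be an odd integer. Then $$m^{p}T_{p}^{(k)}(1,m)=\sum_{i=0}^{p}\binom{p}{i}E_{p-i}^{(k)}(1)E_{i}m^{p-i}+\sum_{i=1}^{p}\binom{p}{i-1}\big(E_{p-i+1}^{(k)}(1)-E_{p-i+1}^{(k)}\big)m^{p-i}E_{i}+2\sum_{\nu=0}^{p}\binom{p}{\nu}E_{\nu}^{(k)}E_{p+1-\nu}m^{\nu-1}.$$
   Context: Euler polynomials $E_n(x)$ are defined by $\frac{2}{e^t+1}e^{xt}=\sum_{n=0}^{\infty}E_n(x)\frac{t^n}{n!}$ and $E_n=E_n(0)$. For $k\in\mathbb{Z}$, $\mathrm{Ei}_k(x)=\sum_{n=1}^{\infty}\frac{x^n}{n^k(n-1)!}$; the poly-Genocchi polynomials $G_n^{(k)}(x)$ are defined by $\frac{2\,\mathrm{Ei}_k(\log(1+t))}{e^t+1}e^{xt}=\sum_{n=0}^{\infty}G_n^{(k)}(x)\frac{t^n}{n!}$; the poly-Euler polynomials are $E_n^{(k)}(x)=\frac{G_{n+1}^{(k)}(x)}{n+1}$ ($n\ge0$), $E_n^{(k)}=E_n^{(k)}(0)$, and the poly-Euler functions are $\overline{E}_n^{(k)}(x)=E_n^{(k)}(x-[x])$, where $[x]$ is the greatest integer $\le x$. For positive integers $h,m,p$, the poly-Dedekind type DC sum is $T_p^{(k)}(h,m)=2\sum_{\mu=1}^{m-1}(-1)^{\mu}\frac{\mu}{m}\overline{E}_p^{(k)}\big(\frac{h\mu}{m}\big)$.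 *)

(* Formal power series over a realType R are represented by
   their coefficient sequences (nat -> R): s n is the coefficient of t^n. *)
From mathcomp Require Import all_boot all_order all_algebra.
From mathcomp Require Import all_classical all_reals.
Unset Printing Implicit Defensive.
Import Order.TTheory GRing.Theory Num.Theory.
Local Open Scope ring_scope.

Section FPS.
Variable R : realType.

Definition fps_mul (a b : nat -> R) : nat -> R :=
  fun n => \sum_(i < n.+1) a i * b (n - i)%N.

Definition fps_pow (a : nat -> R) (j : nat) : nat -> R :=
  iter j (fps_mul a) (fun n => if n == 0%N then 1 else 0).

(* composition f(g(t)), meaningful when g 0 = 0 *)
Definition fps_comp (f g : nat -> R) : nat -> R :=
  fun n => \sum_(j < n.+1) f j * fps_pow g j n.

(* multiplicative inverse of a formal power series with a 0 != 0 *)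
Fixpoint fps_inv_aux (a : nat -> R) (n : nat) : seq R :=
  match n with
  | 0%N => [:: (a 0%N)^-1]
  | n'.+1 => let s := fps_inv_aux a n' in
      rcons s (- (a 0%N)^-1 * \sum_(1 <= j < n.+1) a j * nth 0 s (n - j)%N)
  end.
Definition fps_inv (a : nat -> R) : nat -> R := fun n => nth 0 (fps_inv_aux a n) n.

Definition fps_exp (x : R) : nat -> R := fun n => x ^+ n / (n`!)%:R.

(* 2 / (e^t + 1) *)
Definition fps_euler : nat -> R :=
  fps_inv (fun n => (fps_exp 1 n + (if n == 0%N then 1 else 0)) / 2).

Definition fps_log1p : nat -> R :=
  fun n => if n == 0%N then 0 else (-1) ^+ n.-1 / n%:R.

Definition fps_Ei (k : int) : nat -> R :=
  fun n => if n == 0%N then 0 else ((n%:R : R) ^ k)^-1 / ((n.-1)`!)%:R.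

(* Euler polynomials: 2/(e^t+1) e^{xt} = sum E_n(x) t^n/n! *)
Definition EulerPoly (n : nat) (x : R) : R :=
  (n`!)%:R * fps_mul fps_euler (fps_exp x) n.
Definition EulerNum (n : nat) : R := EulerPoly n 0.

(* poly-Genocchi polynomials:
   2 Ei_k(log(1+t))/(e^t+1) e^{xt} = sum G_n^{(k)}(x) t^n/n! *)
Definition polyGenocchi (k : int) (n : nat) (x : R) : R :=
  (n`!)%:R *
  fps_mul (fps_mul (fun j => 2 * fps_comp (fps_Ei k) fps_log1p j) fps_euler)
          (fps_exp x) n.

Definition polyEuler (k : int) (n : nat) (x : R) : R :=
  polyGenocchi k n.+1 x / (n.+1)%:R.
Definition polyEulerNum (k : int) (n : nat) : R := polyEuler k n 0.

Definition polyEulerFun (k : int) (n : nat) (x : R) : R :=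
  polyEuler k n (x - (Num.floor x)%:~R).

Definition polyDC (k : int) (p h m : nat) : R :=
  2 * \sum_(1 <= mu < m) (-1) ^+ mu * (mu%:R / m%:R)
        * polyEulerFun k p (h%:R * mu%:R / m%:R).

End FPS.

(* For 0 <= mu < m the poly-Euler function at mu/m is the polynomial
   E_p^(k)(x) = sum_j C(p,j) E_j^(k) x^(p-j) evaluated at mu/m, so m^p T_p^(k)(1,m)
   is a combination of the alternating power sums sum_(mu<m) (-1)^mu mu^r.
   The shift identity E_r(x+1) + E_r(x) = 2 x^r, which comes from
   2/(e^t+1) * (e^t+1)/2 = 1, evaluates such a sum for odd m as E_r + E_r(m).
   Expanding E_r(m) and regrouping the resulting double sum with Pascal's rule
   and C(p,j) C(p-j,i) = C(p,i) C(p-i,j) gives the three sums of the statement. *)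

From mathcomp Require Import all_boot all_order all_algebra.
From mathcomp Require Import all_classical all_reals.
From mathcomp Require Import ring lra zify.
Import Order.TTheory GRing.Theory Num.Theory.
Local Open Scope ring_scope.

Lemma mul_bin_sub_swap p i j :
  ('C(p, j) * 'C(p - j, i) = 'C(p, i) * 'C(p - i, j))%N.
Proof.
have [ijp | pij] := leqP (i + j) p; last first.
  have vanish q r : (p < q + r)%N -> ('C(p, q) * 'C(p - q, r) = 0)%N.
    move=> pqr; have [qp | /bin_small -> //] := leqP q p.
    by rewrite (@bin_small (p - q)) ?muln0 //; lia.
  by rewrite !vanish // addnC.
have fact_pos : (0 < i`! * j`! * (p - i - j)`!)%N by rewrite !muln_gt0 !fact_gt0.
apply/eqP; rewrite -(eqn_pmul2r fact_pos); apply/eqP.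
transitivity (p`!).
  rewrite -(@bin_fact p j) 1?[in RHS]mulnC -?(@bin_fact (p - j) i); try lia.
  rewrite (subnAC p j i); ring.
rewrite -(@bin_fact p i) -?(@bin_fact (p - i) j); try lia; ring.
Qed.

Lemma exchange_big_nat_triangle (V : nmodType) p (F : nat -> nat -> V) :
  \sum_(0 <= j < p.+1) \sum_(0 <= i < (p - j).+1) F j i =
  \sum_(0 <= i < p.+1) \sum_(0 <= j < (p - i).+1) F j i.
Proof.
have widen q (G : nat -> V) : (q <= p)%N ->
    \sum_(0 <= i < (p - q).+1) G i = \sum_(0 <= i < p.+1 | (i + q <= p)%N) G i.
  move=> qp; rewrite (@big_nat_widen _ _ _ 0 (p - q).+1 p.+1) ?ltnS ?leq_subr //.
  by apply: eq_bigl => i; apply/idP/idP; lia.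
rewrite (eq_big_nat _ _ (fun j jp => widen j (F j) _)); last by lia.
rewrite [RHS](eq_big_nat _ _ (fun i ip => widen i (F^~ i) _)); last by lia.
rewrite (exchange_big_dep_nat predT) //=; apply: eq_bigr => i _.
by apply: eq_bigl => j; rewrite addnC.
Qed.

Section Appell.
Variable R : comPzRingType.

Lemma exchange_big_bin p (F : nat -> nat -> R) :
  \sum_(0 <= j < p.+1) \sum_(0 <= i < (p - j).+1) 'C(p, j)%:R * 'C(p - j, i)%:R * F j i =
  \sum_(0 <= i < p.+1) \sum_(0 <= j < (p - i).+1) 'C(p, i)%:R * 'C(p - i, j)%:R * F j i.
Proof.
rewrite exchange_big_nat_triangle; do 2![apply: eq_bigr => ? _].
by rewrite -!natrM mul_bin_sub_swap.
Qed.

Definition appell (a : nat -> R) n x :=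
  \sum_(0 <= i < n.+1) 'C(n, i)%:R * a i * x ^+ (n - i).

Lemma appell0 a n : appell a n 0 = a n.
Proof.
rewrite /appell big_nat_recr //= subnn binn mul1r mulr1 big1_seq ?add0r //.
move=> i /andP[_]; rewrite mem_index_iota => /andP[_ ilt].
by rewrite expr0n subn_eq0 leqNgt ilt mulr0.
Qed.

Lemma appell1 a n : appell a n 1 = \sum_(0 <= i < n.+1) 'C(n, i)%:R * a i.
Proof. by apply: eq_bigr => i _; rewrite expr1n mulr1. Qed.

Lemma appell1_sub a n :
  appell a n.+1 1 - a n.+1 = \sum_(0 <= i < n.+1) 'C(n.+1, i)%:R * a i.
Proof. by rewrite appell1 big_nat_recr //= binn mul1r addrK. Qed.

Lemma appellD a n x y :
  appell a n (x + y) = \sum_(0 <= i < n.+1) 'C(n, i)%:R * appell a (n - i) x * y ^+ i.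
Proof.
have binomial q : (x + y) ^+ q =
    \sum_(0 <= i < q.+1) (x ^+ (q - i) * y ^+ i) *+ 'C(q, i).
  by rewrite exprDn big_mkord.
rewrite /appell; under eq_bigr do rewrite binomial mulr_sumr.
transitivity (\sum_(0 <= j < n.+1) \sum_(0 <= i < (n - j).+1)
    'C(n, j)%:R * 'C(n - j, i)%:R * (a j * x ^+ (n - i - j) * y ^+ i)).
  apply: eq_bigr => j _; apply: eq_bigr => i _.
  rewrite subnAC -mulr_natr; ring.
rewrite exchange_big_bin; apply: eq_bigr => i _.
rewrite mulr_sumr mulr_suml; apply: eq_bigr => j _; ring.
Qed.

Lemma sum_pascal_appell1 p (a g : nat -> R) :
  \sum_(0 <= j < p.+1) \sum_(0 <= i < (p - j).+1)
     'C(p, j)%:R * a j * 'C((p - j).+1, i)%:R * g i =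
    \sum_(0 <= i < p.+1) 'C(p, i)%:R * appell a (p - i) 1 * g i
  + \sum_(1 <= i < p.+1) 'C(p, i.-1)%:R * (appell a (p - i).+1 1 - a (p - i).+1) * g i.
Proof.
have pascal q i : 'C(q.+1, i)%:R = 'C(q, i)%:R + (0 < i)%:R * 'C(q, i.-1)%:R :> R.
  by case: i => [|i]; rewrite ?bin0 ?mul0r ?addr0 // binS natrD mul1r.
transitivity (\sum_(0 <= j < p.+1) \sum_(0 <= i < (p - j).+1)
    'C(p, j)%:R * 'C(p - j, i)%:R * (a j * g i)
  + \sum_(0 <= j < p.+1) \sum_(0 <= i < (p - j).+1)
    'C(p, j)%:R * a j * ((0 < i)%:R * 'C(p - j, i.-1)%:R) * g i).
  rewrite -big_split /=; apply: eq_bigr => j _; rewrite -big_split /=.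
  by apply: eq_bigr => i _; rewrite pascal; ring.
congr (_ + _).
  rewrite exchange_big_bin; apply: eq_bigr => i _.
  by rewrite appell1 mulr_sumr mulr_suml; apply: eq_bigr => j _; ring.
rewrite exchange_big_nat_triangle big_ltn // big1 ?add0r => [|j _]; last first.
  by rewrite mul0r mulr0 mul0r.
apply: eq_big_nat => -[//|i] /andP[_ ilt] /=.
rewrite appell1_sub (_ : (p - i.+1).+1 = p - i)%N; last by lia.
rewrite mulr_sumr mulr_suml; apply: eq_bigr => j _.
transitivity ('C(p, j)%:R * 'C(p - j, i)%:R * (a j * g i.+1)); first by ring.
by rewrite -natrM mul_bin_sub_swap natrM; ring.
Qed.

End Appell.

Arguments appell {R} a n x.

Lemma expfz_subn1 (F : fieldType) (x : F) n : x != 0 -> x ^ (n%:Z - 1) = x ^+ n / x.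
Proof. by move=> x_neq0; rewrite expfzDr // exprN1. Qed.

Section PowerSeries.
Variable R : realType.

Lemma fps_mulC (a b : nat -> R) n : fps_mul R a b n = fps_mul R b a n.
Proof.
rewrite /fps_mul (reindex_inj rev_ord_inj); apply: eq_bigr => -[i ilt] _ /=.
by rewrite subSS subKn 1?mulrC // -ltnS.
Qed.

Lemma fps_exp0 n : fps_exp R 0 n = (n == 0)%:R.
Proof. by rewrite /fps_exp expr0n; case: n => [|n] /=; rewrite ?divr1 ?mul0r. Qed.

Lemma fps_mul_exp0 (c : nat -> R) n : fps_mul R c (fps_exp R 0) n = c n.
Proof.
rewrite /fps_mul big_ord_recr /= subnn fps_exp0 mulr1 big1 ?add0r // => i _.
by rewrite fps_exp0 subn_eq0 leqNgt ltn_ord mulr0.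
Qed.

Lemma fps_appell (c : nat -> R) n x :
  (n`!)%:R * fps_mul R c (fps_exp R x) n =
    appell (fun i => (i`!)%:R * fps_mul R c (fps_exp R 0) i) n x.
Proof.
rewrite /appell big_mkord; under [RHS]eq_bigr do rewrite (fps_mul_exp0 c).
rewrite /fps_mul mulr_sumr; apply: eq_bigr => -[i /= ilt] _.
rewrite /fps_exp -(@bin_fact n i) 1?natrM; last by rewrite -ltnS.
by field; rewrite pnatr_eq0 -lt0n fact_gt0.
Qed.

Lemma size_fps_inv_aux (a : nat -> R) n : size (fps_inv_aux R a n) = n.+1.
Proof. by elim: n => [|n IH] //=; rewrite size_rcons IH. Qed.

Lemma nth_fps_inv_aux (a : nat -> R) n j :
  (j <= n)%N -> nth 0 (fps_inv_aux R a n) j = fps_inv R a j.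
Proof.
elim: n => [|n IH] jn; first by rewrite leqn0 in jn; rewrite (eqP jn).
rewrite /= nth_rcons size_fps_inv_aux; case: ltnP => [jlt | jge].
  by apply: IH; rewrite -ltnS.
have -> : j = n.+1 by apply/eqP; rewrite eqn_leq jn jge.
by rewrite eqxx /fps_inv /= nth_rcons size_fps_inv_aux ltnn eqxx.
Qed.

Lemma fps_invS (a : nat -> R) n : fps_inv R a n.+1 =
  - (a 0%N)^-1 * \sum_(1 <= j < n.+2) a j * fps_inv R a (n.+1 - j).
Proof.
rewrite /fps_inv /= nth_rcons size_fps_inv_aux ltnn eqxx.
congr (_ * _); apply: eq_big_nat => j /andP[j_gt0 _].
by rewrite nth_fps_inv_aux //; lia.
Qed.

Lemma fps_mul_inv (a : nat -> R) n :
  a 0%N != 0 -> fps_mul R a (fps_inv R a) n = (n == 0)%:R.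
Proof.
move=> a0; rewrite /fps_mul; case: n => [|n].
  by rewrite big_ord1 /fps_inv /= divff.
rewrite big_ord_recl subn0 fps_invS mulrA mulrN divff // mulN1r.
by rewrite big_add1 big_mkord addNr.
Qed.

Lemma EulerPolyE n x : EulerPoly R n x = appell (EulerNum R) n x.
Proof. exact: fps_appell. Qed.

Lemma EulerPoly1 n : EulerPoly R n 1 + EulerNum R n = 2 * (n == 0)%:R.
Proof.
pose b k := (fps_exp R 1 k + (if k == 0 then 1 else 0)) / 2.
have euler_inv : fps_mul R (fps_euler R) b n = (n == 0)%:R.
  rewrite fps_mulC fps_mul_inv // /b /fps_exp /= expr0 fact0 divr1.
  by apply/eqP; lra.
have -> : 2 * (n == 0)%:R = (n`!)%:R * (2 * fps_mul R (fps_euler R) b n) :> R.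
  by rewrite euler_inv; case: n {euler_inv} => [|n]; rewrite ?fact0 ?mul1r ?mulr0.
rewrite /EulerNum /EulerPoly -mulrDr /fps_mul mulr_sumr -big_split /=.
congr (_ * _); apply: eq_bigr => i _; rewrite fps_exp0 /b.
by case: (n - i == 0)%N => /=; field.
Qed.

Lemma EulerPolyD1 n x : EulerPoly R n (x + 1) + EulerPoly R n x = 2 * x ^+ n.
Proof.
rewrite !EulerPolyE (addrC x) -[in X in _ + X](add0r x) !appellD -big_split /=.
transitivity (\sum_(0 <= i < n.+1) 'C(n, i)%:R * (2 * (n - i == 0)%N%:R) * x ^+ i).
  by apply: eq_bigr => i _; rewrite appell0 -EulerPolyE -EulerPoly1; ring.
rewrite big_nat_recr //= subnn eqxx binn big1_seq; first by rewrite add0r mulr1 mul1r.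
move=> i /andP[_]; rewrite mem_index_iota => /andP[_ ilt].
by rewrite subn_eq0 leqNgt ilt mulr0 mulr0 mul0r.
Qed.

Lemma alt_sum_powers r n :
  2 * \sum_(0 <= mu < n) (-1) ^+ mu * (mu%:R : R) ^+ r =
    EulerNum R r - (-1) ^+ n * EulerPoly R r n%:R.
Proof.
elim: n => [|n IH]; first by rewrite big_geq // mulr0 mul1r subrr.
have shift : EulerPoly R r n.+1%:R = 2 * n%:R ^+ r - EulerPoly R r n%:R.
  by rewrite -EulerPolyD1 -natr1 addrK.
by rewrite big_nat_recr //= mulrDr IH shift exprS; ring.
Qed.

Lemma alt_sum_powers_odd r m : odd m ->
  2 * \sum_(0 <= mu < m) (-1) ^+ mu * (mu%:R : R) ^+ r.+1 =
    2 * EulerNum R r.+1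
  + \sum_(0 <= i < r.+1) 'C(r.+1, i)%:R * EulerNum R i * (m%:R : R) ^+ (r.+1 - i).
Proof.
move=> m_odd; rewrite alt_sum_powers -signr_odd m_odd EulerPolyE /appell.
by rewrite big_nat_recr //= subnn binn; ring.
Qed.

Lemma polyGenocchiE k n x :
  polyGenocchi R k n x = appell (fun i => polyGenocchi R k i 0) n x.
Proof. exact: fps_appell. Qed.

Lemma polyGenocchi00 k : polyGenocchi R k 0 0 = 0.
Proof.
by rewrite /polyGenocchi /fps_mul !big_ord1 /fps_comp big_ord1 /fps_Ei /= !(mul0r, mulr0).
Qed.

Lemma polyEulerE k n x : polyEuler R k n x = appell (polyEulerNum R k) n x.
Proof.
rewrite /polyEuler polyGenocchiE /appell big_nat_recl //= polyGenocchi00.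
rewrite mulr0 mul0r add0r mulr_suml; apply: eq_bigr => i _.
have binS_div : 'C(n.+1, i.+1)%:R = n.+1%:R * 'C(n, i)%:R / i.+1%:R :> R.
  by rewrite -natrM mul_bin_diag natrM mulrC mulKf ?pnatr_eq0.
rewrite /polyEulerNum /polyEuler subSS binS_div.
by field; rewrite !nat1r !pnatr_eq0.
Qed.

Lemma polyEulerFun_small k n x : 0 <= x < 1 -> polyEulerFun R k n x = polyEuler R k n x.
Proof. by move=> x01; rewrite /polyEulerFun (@floor_def _ _ 0) ?subr0. Qed.

Lemma polyDC_expand k p m : (0 < m)%N ->
  (m%:R : R) ^+ p * polyDC R k p 1 m =
    \sum_(0 <= j < p.+1) 'C(p, j)%:R * polyEulerNum R k j * (m%:R : R) ^ (j%:Z - 1)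
      * (2 * \sum_(0 <= mu < m) (-1) ^+ mu * (mu%:R : R) ^+ (p - j).+1).
Proof.
move=> m_gt0; set M := (m%:R : R).
have M_gt0 : 0 < M by rewrite ltr0n.
transitivity (M ^+ p * (2 * \sum_(0 <= mu < m)
    (-1) ^+ mu * (mu%:R / M) * appell (polyEulerNum R k) p (mu%:R / M))).
  rewrite (big_ltn m_gt0) /= mul0r mulr0 mul0r add0r; congr (_ * (_ * _)).
  apply: eq_big_nat => mu /andP[_ mu_lt]; rewrite mul1r polyEulerFun_small ?polyEulerE //.
  by rewrite -/M divr_ge0 ?ler0n ?ltW //= ltr_pdivrMr // mul1r ltr_nat.
under eq_bigr do rewrite /appell mulr_sumr.
rewrite exchange_big_nat !mulr_sumr; apply: eq_big_nat => j /andP[_ jlt].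
have M_neq0 : M != 0 by rewrite gt_eqF.
have Mp : M ^+ p = M ^+ j * M ^+ (p - j) by rewrite -exprD subnKC // -ltnS.
rewrite !mulr_sumr; apply: eq_bigr => mu _.
rewrite expfz_subn1 // Mp expr_div_n exprS.
by field; rewrite M_neq0 expf_neq0.
Qed.

Lemma polyDC_odd k p m : (0 < m)%N -> odd m ->
  (m%:R : R) ^+ p * polyDC R k p 1 m =
    2 * \sum_(0 <= nu < p.+1)
       'C(p, nu)%:R * polyEulerNum R k nu * EulerNum R (p.+1 - nu)
         * (m%:R : R) ^ (nu%:Z - 1)
  + \sum_(0 <= j < p.+1) \sum_(0 <= i < (p - j).+1)
       'C(p, j)%:R * polyEulerNum R k j * 'C((p - j).+1, i)%:R
         * (EulerNum R i * (m%:R : R) ^+ (p - i)).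
Proof.
move=> m_gt0 m_odd; set M := (m%:R : R).
have M_neq0 : M != 0 by rewrite pnatr_eq0 -lt0n.
rewrite polyDC_expand // mulr_sumr -big_split /=; apply: eq_big_nat => j /andP[_ jlt].
have jp : (j <= p)%N by rewrite -ltnS.
rewrite alt_sum_powers_odd // subSn // mulrDr; congr (_ + _); first by ring.
rewrite !mulr_sumr; apply: eq_big_nat => i /andP[_ ilt].
have Mpi : M ^+ (p - i) = M ^+ j * M ^+ (p - i - j) by rewrite -exprD; congr (_ ^+ _); lia.
rewrite expfz_subn1 // Mpi (_ : (p - j).+1 - i = (p - i - j).+1)%N ?exprS; last by lia.
by field.
Qed.

End PowerSeries.

Theorem theorem12 (R : realType) (k : int) (m p : nat) :
  (0 < m)%N -> odd m -> (1 < p)%N -> odd p ->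
  (m%:R : R) ^+ p * polyDC R k p 1 m =
    \sum_(0 <= i < p.+1)
       'C(p, i)%:R * polyEuler R k (p - i) 1 * EulerNum R i * (m%:R : R) ^+ (p - i)
  + \sum_(1 <= i < p.+1)
       'C(p, i.-1)%:R * (polyEuler R k (p - i).+1 1 - polyEulerNum R k (p - i).+1)
         * (m%:R : R) ^+ (p - i) * EulerNum R i
  + 2 * \sum_(0 <= nu < p.+1)
       'C(p, nu)%:R * polyEulerNum R k nu * EulerNum R (p.+1 - nu)
         * (m%:R : R) ^ (nu%:Z - 1).
Proof.
move=> m_gt0 m_odd _ _.
rewrite polyDC_odd // addrC sum_pascal_appell1.
by congr (_ + _ + _); apply: eq_bigr => i _; rewrite polyEulerE; ring.
Qed.
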